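(* Let $n,a,h,t$ be positive integers with $h\le n$ and $a\le t\le ah$. The code $$\mathcal C(n;t)=\Big\{\mathbf x\in\mathbb Z^n:\ \sum_{i=1}^n x_i\equiv 0 \pmod{t+1}\Big\}$$ is an $(a,h,t)$-AED code in $\mathbb Z^n$, its density equals $\mu(\mathcal C(n;t))=\frac{1}{t+1}$, and it is optimal: no $(a,h,t)$-AED code in $\mathbb Z^n$ has upper density larger than $\frac{1}{t+1}$.
   Context: Channel over the alphabet $\mathbb Z$: an input $\mathbf x=(x_1,\dots,x_n)\in\mathbb Z^n$ can produce any output $\mathbf y\in\mathbb Z^n$ satisfying (1) $0\le y_i-x_i\le a$ for all $i$; (2) $\sum_{i=1}^n \mathbb 1_{\{y_i\ne x_i\}}\le h$; (3) $\sum_{i=1}^n (y_i-x_i)\le t$. $\mathrm{Out}(\mathbf x)$ denotes the set of all such outputs $\mathbf y$. A code $\mathcal C\subseteq\mathbb Z^n$ is an $(a,h,t)$-AED code if for all $\mathbf x\in\mathcal C$ and all $\mathbf y\in\mathrm{Out}(\mathbf x)$ with $\mathbf y\neq\mathbf x$, we have $\mathbf y\notin\mathcal C$. The density of $\mathcal C\subseteq\mathbb Z^n$ is $\mu(\mathcal C)=\lim_{k\to\infty}\frac{|\mathcal C\cap\{-k,\dots,k\}^n|}{(2k+1)^n}$ when the limit exists; the upper density $\overline{\mu}(\mathcal C)$ is defined with $\limsup$ in place of $\lim$. *)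

From HB Require Import structures.
From mathcomp Require Import all_boot all_order all_algebra.
From Stdlib Require Import Reals.
Set Implicit Arguments. Unset Strict Implicit. Unset Printing Implicit Defensive.
Import GRing.Theory Num.Theory.
Local Open Scope ring_scope.

Definition vec (n : nat) := {ffun 'I_n -> int}.

Definition Out (n a h t : nat) (x y : vec n) : Prop :=
  (forall i : 'I_n, (0 <= y i - x i) /\ (y i - x i <= Posz a)) /\
  leq #|[pred i : 'I_n | y i != x i]| h /\
  (\sum_(i < n) (y i - x i) <= Posz t).

Definition AED (n a h t : nat) (C : pred (vec n)) : Prop :=
  forall x y : vec n, C x -> Out a h t x y -> y != x -> ~~ C y.

Definition Cnt (n t : nat) : pred (vec n) :=
  fun x => (\sum_(i < n) x i) \in dvdz (Posz t.+1).

Arguments Cnt : clear implicits.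

(* |C ∩ {-k,...,k}^n| : points of the box are f - k with f : 'I_n -> 'I_(2k+1). *)
Definition box_count (n : nat) (C : pred (vec n)) (k : nat) : nat :=
  #|[pred f : {ffun 'I_n -> 'I_(k.*2.+1)} |
      C [ffun i => Posz (f i) - Posz k]]|.

Definition box_ratio (n : nat) (C : pred (vec n)) (k : nat) : R :=
  Rdiv (INR (box_count C k)) (INR (expn k.*2.+1 n)).

Definition has_density (n : nat) (C : pred (vec n)) (d : R) : Prop :=
  Un_cv (box_ratio C) d.

Definition is_limsup (u : nat -> R) (L : R) : Prop :=
  exists S : nat -> R,
    (forall N : nat, is_lub (fun r => exists k : nat, le N k /\ r = u k) (S N))
    /\ Un_cv S L.

Definition is_upper_density (n : nat) (C : pred (vec n)) (d : R) : Prop :=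
  is_limsup (box_ratio C) d.

From Stdlib Require Import Reals Lra.
From HB Require Import structures.
From mathcomp Require Import all_boot all_order all_algebra zify.
Set Implicit Arguments. Unset Strict Implicit. Unset Printing Implicit Defensive.
Import Order.TTheory GRing.Theory Num.Theory.

(* An admissible error raises the coordinate sum by 1 to t, so it never preserves the
   residue mod t+1: C(n;t) is AED.  Conversely, for 0 <= j <= t let v_j be the vector of
   coordinate sum j that fills the first h coordinates greedily with entries <= a; since
   v_j - v_i is an admissible error for i < j, the translates C + v_0, ..., C + v_t of an
   AED code C are pairwise disjoint.  In the box {-k, ..., k}^n this gives
   |C ∩ box| (t+1) <= (2k+1)^n + O((2k+1)^(n-1)), the error term coming from points near the
   upper faces.  For C(n;t), lowering one coordinate by the residue of the sum maps all
   but O((2k+1)^(n-1)) box points at most (t+1)-to-one to codewords, so its ratio is squeezed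
   to 1/(t+1). *)

Lemma card_ord_window (p lo w : nat) : #|[pred c : 'I_p | lo <= c < lo + w]| <= w.
Proof.
rewrite cardE -(size_map val) -[w in _ <= w](size_iota lo w).
apply: uniq_leq_size.
  by rewrite map_inj_uniq ?enum_uniq //; apply: val_inj.
by move=> ? /mapP [c]; rewrite mem_enum inE mem_iota => ? ->.
Qed.

Lemma card_ord_lt (p q : nat) : #|[pred c : 'I_p | c < q]| <= q.
Proof. exact: card_ord_window p 0 q. Qed.

Lemma inj_in_leq_card (T T' : finType) (A : pred T) (B : pred T') (f : T -> T') :
  {in A &, injective f} -> {in A, forall x, f x \in B} -> #|A| <= #|B|.
Proof.
move=> injf fAB; rewrite -(card_in_image injf); apply: subset_leq_card.
by apply/subsetP => _ /imageP [x Ax ->]; apply: fAB.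
Qed.

Lemma card_exists_leq_sum (I T : finType) (P : pred I) (Q : I -> pred T) :
  #|[pred x | [exists i, P i && Q i x]]| <= \sum_(i | P i) #|Q i|.
Proof.
rewrite -sum1_card (eq_bigr (fun i => \sum_(x | Q i x) 1)) => [|i _]; last first.
  by rewrite sum1_card.
rewrite (exchange_big_dep predT) //= big_mkcond /=; apply: leq_sum => x _.
case: ifP => //; rewrite inE => /existsP [i /andP [Pi Qi]].
by rewrite (bigD1 i) ?Pi //= Qi.
Qed.

Lemma card_ffun_coord (aT rT : finType) (x0 : aT) (P : pred rT) :
  #|[pred f : {ffun aT -> rT} | P (f x0)]| = #|P| * #|rT| ^ #|aT|.-1.
Proof.
pose F x := if x == x0 then P else predT.
rewrite (eq_card (B := finfun.family F)) => [|f]; last first.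
  rewrite !inE; apply/idP/familyP => [Pf x|/(_ x0)]; last by rewrite /F eqxx.
  by rewrite /F; case: eqP => [->|].
rewrite card_family foldrE big_map big_enum /= (bigD1 x0) //= /F eqxx.
rewrite (eq_bigr (fun _ => #|rT|)) => [|x /negbTE ->]; last by rewrite cardT.
by rewrite prod_nat_const cardC1.
Qed.

Lemma card_pred_fst (T1 T2 : finType) (A : pred T1) :
  #|[pred p : T1 * T2 | A p.1]| = #|A| * #|T2|.
Proof.
rewrite -cardsT -(cardsE A) -cardsX; apply: eq_card => -[x y].
by rewrite !inE andbT.
Qed.

(* Coordinate [l] of the translation vector [v_j]. *)
Definition fill (a h j l : nat) : nat := if l < h then minn a (j - a * l) else 0.

Lemma fill_le a h j l : fill a h j l <= a.
Proof. by rewrite /fill; case: ifP => _; lia. Qed.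

Lemma leq_fill a h i j l : i <= j -> fill a h i l <= fill a h j l.
Proof. by rewrite /fill; case: ifP => _; lia. Qed.

Lemma fill_support a h j l : fill a h j l != 0 -> l < h.
Proof. by rewrite /fill; case: ifP => //; rewrite eqxx. Qed.

Lemma sum_fill (n a h j : nat) : h <= n -> j <= a * h ->
  \sum_(l < n) fill a h j l = j.
Proof.
move=> hn jah; rewrite -(big_mkord xpredT (fill a h j)) (big_cat_nat _ hn) //=.
rewrite [X in _ + X]big_nat_cond [X in _ + X]big1 ?addn0 => [|l]; last first.
  by rewrite /fill andbT => /andP [hl _]; rewrite ltnNge hl.
rewrite big_nat_cond (eq_bigr (fun l => minn a (j - a * l))) => [|l]; last first.
  by rewrite andbT /fill => /andP [_ ->].
have sum_min k : \sum_(0 <= l < k) minn a (j - a * l) = minn j (a * k).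
  elim: k => [|k IH]; first by rewrite big_geq //; lia.
  by rewrite big_nat_recr //= IH; lia.
by rewrite -big_nat_cond sum_min; lia.
Qed.

Section Channel.
Local Open Scope ring_scope.
Variables (n a h t : nat).

Lemma out_add (x d : vec n) :
  (forall i, 0 <= d i <= a%:Z) -> (#|[pred i | d i != 0]| <= h)%N ->
  \sum_(i < n) d i <= t%:Z -> Out a h t x (x + d).
Proof.
have dE i : (x + d) i - x i = d i by rewrite ffunE addrC addKr.
move=> d0a supp sum_le; split; [|split].
- by move=> i; rewrite dE; apply/andP/d0a.
- by rewrite (eq_card (B := [pred i | d i != 0])) // => i; rewrite !inE -subr_eq0 dE.
- by rewrite (eq_bigr _ (fun i _ => dE i)).
Qed.

Lemma aed_out_eq (C : pred (vec n)) (x y : vec n) :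
  AED a h t C -> C x -> C y -> Out a h t x y -> y = x.
Proof. by move=> aed Cx Cy /(aed _ _ Cx); case: eqP => // _ /(_ isT); rewrite Cy. Qed.

Definition fillv (j : nat) : vec n := [ffun l : 'I_n => (fill a h j l)%:Z].

Hypotheses (hn : (h <= n)%N) (ht : (t <= a * h)%N).

Lemma sum_fillv j : (j <= a * h)%N -> \sum_(l < n) fillv j l = j%:Z.
Proof.
move=> jah; rewrite (eq_bigr (fun l : 'I_n => (fill a h j l)%:Z)) => [|l _]; last first.
  by rewrite ffunE.
by rewrite -(big_morph Posz PoszD (erefl 0%:Z)) sum_fill.
Qed.

Lemma out_add_fillv (x : vec n) i j :
  (i <= j <= t)%N -> Out a h t x (x + (fillv j - fillv i)).
Proof.
move=> /andP [ij jt].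
have dE l : (fillv j - fillv i) l = (fill a h j l)%:Z - (fill a h i l)%:Z.
  by rewrite !ffunE.
apply: out_add => [l||].
- by rewrite dE; have := leq_fill a h l ij; have := fill_le a h j l; lia.
- apply: leq_trans (card_ord_lt n h); apply: subset_leq_card; apply/subsetP => l.
  rewrite !inE dE subr_eq0 => /eqP neq; apply: (@fill_support a h j); apply/eqP => j0.
  by apply: neq; have := leq_fill a h l ij; rewrite j0; lia.
- rewrite (eq_bigr (fun l => fillv j l - fillv i l)) => [|l _]; last by rewrite !ffunE.
  by rewrite sumrB !sum_fillv; lia.
Qed.

Lemma aed_fillv_cancel (C : pred (vec n)) (x y : vec n) i j :
  AED a h t C -> C x -> C y -> (i <= j <= t)%N -> x + fillv i = y + fillv j ->
  x = y /\ i = j.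
Proof.
move=> aed Cx Cy ijt E.
have xE : x = y + (fillv j - fillv i) by rewrite addrA -E addrK.
have xy : x = y by apply: (aed_out_eq aed Cy Cx); rewrite {1}xE; apply: out_add_fillv.
split=> //; move: E; rewrite xy => /addrI /(congr1 (fun v : vec n => \sum_(l < n) v l)).
by rewrite !sum_fillv; [case | lia | lia].
Qed.
End Channel.

(* A point [f] of the box stands for [box_vec f] in [{-k, ..., k}^n], as in [box_count]. *)
Local Notation box n k := {ffun 'I_n -> 'I_(k.*2.+1)}.

Definition box_vec (n k : nat) (f : box n k) : vec n :=
  [ffun i => (Posz (f i) - Posz k)%R].

Lemma box_vec_inj n k : injective (@box_vec n k).
Proof.
move=> f g /ffunP fg; apply/ffunP => i; apply: val_inj.
by have := fg i; rewrite !ffunE => /addIr [].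
Qed.

Definition box_shift (n k : nat) (f : box n k) (d : vec n) : box n k :=
  [ffun i => inord `|(Posz (f i) + d i)%R|].

Lemma box_vec_shift n k (f : box n k) (d : vec n) :
  (forall i, 0 <= Posz (f i) + d i < Posz k.*2.+1)%R ->
  box_vec (box_shift f d) = (box_vec f + d)%R.
Proof.
move=> fd; apply/ffunP => i; have /andP [fd0 fdm] := fd i.
rewrite !ffunE inordK; last by rewrite -ltz_nat gez0_abs.
by rewrite gez0_abs // addrAC.
Qed.

Section AEDCount.
Variables (n a h t k : nat) (C : pred (vec n)).
Hypotheses (hn : h <= n) (ht : t <= a * h) (aed : AED a h t C).
Local Notation m := k.*2.+1.

Definition box_interior : pred (box n k) :=
  [pred f : box n k | [forall l : 'I_n, (l < h) ==> (f l + a < m)]].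

Lemma box_interior_shift_range (f : box n k) j l : f \in box_interior ->
  (0 <= Posz (f l) + fillv n a h j l < Posz m)%R.
Proof.
move=> /forallP /(_ l) fl; rewrite ffunE; have := fill_le a h j l.
case: (ltnP l h) fl => [_ /= lfa|hl _]; first lia.
rewrite /fill ltnNge hl /=; have := ltn_ord (f l); lia.
Qed.

Lemma card_aed_interior :
  #|[pred f : box n k | C (box_vec f) && (f \in box_interior)]| * t.+1 <= m ^ n.
Proof.
rewrite -[t.+1]card_ord -card_pred_fst.
have -> : m ^ n = #|{: box n k}| by rewrite card_ffun !card_ord.
apply: (@leq_card_in _ _ (fun p : box n k * 'I_t.+1 => box_shift p.1 (fillv n a h p.2))).
move=> [f i] [g j]; rewrite !inE /= => /andP [Cf If] /andP [Cg Ig].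
move=> /(congr1 (fun v : box n k => box_vec v)).
rewrite !box_vec_shift => [E||]; last 2 first.
- by move=> l; apply: box_interior_shift_range.
- by move=> l; apply: box_interior_shift_range.
have [ij|ji] := leqP i j.
- have ijt : i <= j <= t by rewrite ij -ltnS ltn_ord.
  by have [/box_vec_inj -> /val_inj ->] := aed_fillv_cancel hn ht aed Cf Cg ijt E.
- have jit : j <= i <= t by rewrite ltnW // -ltnS ltn_ord.
  by have [/box_vec_inj -> /val_inj ->] := aed_fillv_cancel hn ht aed Cg Cf jit (esym E).
Qed.

Lemma card_box_boundary : #|[predC box_interior]| <= h * a * m ^ n.-1.
Proof.
pose Q l (f : box n k) := m <= f l + a.
apply: (@leq_trans #|[pred f | [exists l : 'I_n, (l < h) && Q l f]]|).
  apply: subset_leq_card; apply/subsetP => f; rewrite !inE => /forallPn [l].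
  by rewrite negb_imply -leqNgt => lf; apply/existsP; exists l.
apply: leq_trans (card_exists_leq_sum _ _) _.
rewrite (eq_bigr (fun _ => #|[pred c : 'I_m | m <= c + a]| * m ^ n.-1)) => [|l _].
  rewrite sum_nat_const -mulnA; apply: leq_mul.
    exact: card_ord_lt.
  apply: leq_mul => //; apply: leq_trans (card_ord_window m (m - a) a).
  by apply: subset_leq_card; apply/subsetP => c; rewrite !inE; have := ltn_ord c; lia.
have := card_ffun_coord l [pred c : 'I_m | m <= c + a]; rewrite !card_ord => <-.
exact: eq_card.
Qed.

Lemma aed_box_count : box_count C k * t.+1 <= m ^ n + t.+1 * (h * a * m ^ n.-1).
Proof.
have count_split : box_count C k <=
    #|[pred f : box n k | C (box_vec f) && (f \in box_interior)]| + #|[predC box_interior]|.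
  rewrite -cardUI; apply: leq_trans (leq_addr _ _); apply: subset_leq_card.
  apply/subsetP => f; rewrite !inE => Cf.
  by case: [forall l : 'I_n, _]; rewrite ?orbT ?andbT ?orbF.
rewrite mulnC; apply: leq_trans (leq_mul (leqnn _) count_split) _.
rewrite mulnDr mulnC; apply: leq_add card_aed_interior _.
by rewrite leq_mul2l card_box_boundary orbT.
Qed.
End AEDCount.

Section CntCount.
Local Open Scope ring_scope.
Variables (n t k : nat) (i0 : 'I_n).
Local Notation m := k.*2.+1.

Definition coord_vec (c : int) : vec n := [ffun i => if i == i0 then c else 0].

Lemma sum_coord_vec c : \sum_(i < n) coord_vec c i = c.
Proof.
rewrite (bigD1 i0) //= big1 => [|i /negbTE ni]; last by rewrite ffunE ni.
by rewrite ffunE eqxx addr0.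
Qed.

Definition box_residue (f : box n k) : int := ((\sum_(i < n) box_vec f i) %% t.+1)%Z.

Lemma box_residue_range (f : box n k) : 0 <= box_residue f <= t%:Z.
Proof.
rewrite /box_residue modz_ge0 //=.
by have := @ltz_pmod (\sum_(i < n) box_vec f i) t.+1 isT; lia.
Qed.

Definition box_reduce (f : box n k) : box n k :=
  box_shift f (coord_vec (- box_residue f)).

Lemma box_vec_reduce (f : box n k) : (t <= f i0)%N ->
  box_vec (box_reduce f) = box_vec f + coord_vec (- box_residue f).
Proof.
move=> tf; apply: box_vec_shift => i; have /andP [r0 rt] := box_residue_range f.
rewrite ffunE; have := ltn_ord (f i); case: eqP => [->|_] ?; lia.
Qed.

Lemma Cnt_box_reduce (f : box n k) :
  (t <= f i0)%N -> Cnt n t (box_vec (box_reduce f)).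
Proof.
move=> tf; rewrite /Cnt box_vec_reduce //.
rewrite (eq_bigr (fun i => box_vec f i + coord_vec (- box_residue f) i)) => [|i _].
  rewrite big_split /= sum_coord_vec /box_residue.
  by rewrite {1}(divz_eq (\sum_(i < n) box_vec f i) t.+1) addrK dvdz_mull.
by rewrite ffunE.
Qed.

Lemma Cnt_box_count : (m ^ n <= box_count (Cnt n t) k * t.+1 + t * m ^ n.-1)%N.
Proof.
pose D := [pred f : box n k | t <= f i0]%N.
have residue_lt (f : box n k) : (`|box_residue f| < t.+1)%N.
  by have := box_residue_range f; lia.
have count_D : (#|D| <= box_count (Cnt n t) k * t.+1)%N.
  rewrite -[t.+1 in X in (_ <= X)%N]card_ord -card_pred_fst.
  apply: (@inj_in_leq_card _ _ D _ (fun f => (box_reduce f, inord `|box_residue f|))).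
    move=> f g Df Dg [/(congr1 (fun v : box n k => box_vec v)) Ef /(congr1 val)].
    rewrite /= !inordK //.
    have := box_residue_range f; have := box_residue_range g.
    move=> /andP [? ?] /andP [? ?] rfg; have {}rfg : box_residue f = box_residue g by lia.
    by move: Ef; rewrite !box_vec_reduce // rfg => /addIr /box_vec_inj.
  by move=> f Df; rewrite inE /=; apply: Cnt_box_reduce.
have count_notD : (#|[predC D]| <= t * m ^ n.-1)%N.
  rewrite (eq_card (B := [pred f : box n k | f i0 < t]%N)) => [|f]; last first.
    by rewrite !inE ltnNge.
  have := card_ffun_coord i0 [pred c : 'I_m | c < t]%N; rewrite !card_ord => ->.
  by rewrite leq_mul2r card_ord_lt orbT.
rewrite -{1}(card_ord m) -{1}(card_ord n) -card_ffun -(cardC D).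
exact: leq_add.
Qed.
End CntCount.

Lemma Cnt_AED (n a h t : nat) : AED a h t (Cnt n t).
Proof.
move=> x y Cx [bnd [_ sum_le]] yx; apply/negP => Cy.
have /dvdzP [q sumE] : (t.+1 %| (\sum_(i < n) (y i - x i))%R)%Z by rewrite sumrB rpredB.
have [i yi] : exists i, y i != x i.
  apply/existsP; apply: contraR yx => /existsPn yx; apply/eqP/ffunP => i.
  by apply/eqP; have := yx i; rewrite negbK.
have sum_gt0 : (0 < \sum_(i < n) (y i - x i))%R.
  rewrite (bigD1 i) //= ltr_wpDr ?sumr_ge0 // => [j _|]; first by case: (bnd j).
  by rewrite lt_def subr_eq0 yi; case: (bnd i).
move: sum_le sum_gt0; rewrite sumE; have [q_le0|q_gt0] := lerP q 0; nia.
Qed.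

Section Limits.
Local Open Scope R_scope.

Lemma Un_cv_const (x : R) : Un_cv (fun _ => x) x.
Proof. by move=> eps he; exists 0%N => k _; rewrite /Rdist Rminus_diag Rabs_R0. Qed.

Lemma Un_cv_inv_succ : Un_cv (fun k => / INR k.+1) 0.
Proof.
move=> eps he; have [N [Neps N0]] := archimed_cor1 _ he; exists N => k /le_INR kN.
have N0' : 0 < INR N by apply: lt_0_INR.
have k0 : 0 < / INR k.+1 by apply/Rinv_0_lt_compat/lt_0_INR/Nat.lt_0_succ.
rewrite /Rdist Rminus_0_r Rabs_right; last by apply: Rle_ge; apply: Rlt_le.
by apply: Rle_lt_trans Neps; apply: Rinv_le_contravar => //; rewrite S_INR; lra.
Qed.

Lemma Un_cv_squeeze (u lo hi : nat -> R) (L : R) :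
  (forall k, lo k <= u k <= hi k) -> Un_cv lo L -> Un_cv hi L -> Un_cv u L.
Proof.
move=> bnd cvlo cvhi eps he.
have [N1 HN1] := cvlo eps he; have [N2 HN2] := cvhi eps he.
exists (Nat.max N1 N2) => k Nk; have [lok khi] := bnd k.
have /Rabs_def2 [? ?] := HN1 k (Nat.le_trans _ _ _ (Nat.le_max_l _ _) Nk).
have /Rabs_def2 [? ?] := HN2 k (Nat.le_trans _ _ _ (Nat.le_max_r _ _) Nk).
by apply: Rabs_def1; lra.
Qed.

Lemma is_limsup_le_lim (u v : nat -> R) (d L : R) :
  (forall k, u k <= v k) -> Un_cv v L -> is_limsup u d -> d <= L.
Proof.
move=> uv cvv [S [lubS cvS]]; apply: Rnot_lt_le => Ld.
have he : 0 < (d - L) / 2 by lra.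
have [N1 HN1] := cvS _ he; have [N2 HN2] := cvv _ he.
pose N := Nat.max N1 N2.
have SN_le : S N <= L + (d - L) / 2.
  apply: (proj2 (lubS N)) => _ [k [Nk ->]]; apply: Rle_trans (uv k) _.
  have /Rabs_def2 [? ?] := HN2 k (Nat.le_trans _ _ _ (Nat.le_max_r _ _) Nk); lra.
have /Rabs_def2 [? ?] := HN1 N (Nat.le_max_l _ _); lra.
Qed.

Lemma Un_cv_inv_succ_affine (x c : R) : Un_cv (fun k => x + c * / INR k.+1) x.
Proof.
have := CV_plus _ _ _ _ (Un_cv_const x) (CV_mult _ _ _ _ (Un_cv_const c) Un_cv_inv_succ).
by rewrite Rmult_0_r Rplus_0_r.
Qed.
End Limits.

Section BoxRatio.
Local Open Scope R_scope.
Variables (n k : nat) (C : pred (vec n)).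
Hypothesis (hn : (0 < n)%N).
Local Notation m := k.*2.+1.

Let M := (m ^ n.-1)%N.
Let expE : (m ^ n = m * M)%N.
Proof. by rewrite /M -expnS prednK. Qed.
Let count_pos : 0 < INR M.
Proof. by apply/lt_0_INR/ssrnat.ltP; rewrite expn_gt0. Qed.
Let side_ge : INR k.+1 <= INR m.
Proof. by apply/le_INR/ssrnat.leP; rewrite ltnS -addnn leq_addr. Qed.
Let side_pos : 0 < INR k.+1.
Proof. exact/lt_0_INR/Nat.lt_0_succ. Qed.
Let box_ratioE : box_ratio C k = INR (box_count C k) / (INR m * INR M).
Proof. by rewrite /box_ratio expE mult_INR. Qed.

Lemma box_ratio_le_of_count (T c : nat) : (0 < T)%N ->
  (box_count C k * T <= m ^ n + T * (c * m ^ n.-1))%N ->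
  box_ratio C k <= / INR T + INR c * / INR k.+1.
Proof.
move=> /ssrnat.ltP /lt_0_INR T0; rewrite -/M expE.
move=> /ssrnat.leP /le_INR; rewrite !(mult_INR, plus_INR) box_ratioE => count_le.
set x := INR (box_count C k) in count_le *.
have -> : x / (INR m * INR M) = x * INR T * / (INR T * (INR m * INR M)) by field; lra.
apply: (@Rle_trans _ ((INR m * INR M + INR T * (INR c * INR M)) * / (INR T * (INR m * INR M)))).
  apply: Rmult_le_compat_r => //; apply/Rlt_le/Rinv_0_lt_compat.
  by apply: Rmult_lt_0_compat => //; apply: Rmult_lt_0_compat; lra.
have -> : (INR m * INR M + INR T * (INR c * INR M)) * / (INR T * (INR m * INR M))
  = / INR T + INR c * / INR m by field; lra.
apply/Rplus_le_compat_l/Rmult_le_compat_l; first exact: pos_INR.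
exact: Rinv_le_contravar.
Qed.

Lemma box_ratio_ge_of_count (T s : nat) : (s <= T)%N -> (0 < T)%N ->
  (m ^ n <= box_count C k * T + s * m ^ n.-1)%N ->
  / INR T - / INR k.+1 <= box_ratio C k.
Proof.
move=> /ssrnat.leP /le_INR sT /ssrnat.ltP /lt_0_INR T0; rewrite -/M expE.
move=> /ssrnat.leP /le_INR; rewrite !(mult_INR, plus_INR) box_ratioE => count_ge.
set x := INR (box_count C k) in count_ge *.
apply: (@Rle_trans _ (/ INR T - / INR m)).
  by apply/Rplus_le_compat_l/Ropp_le_contravar/Rinv_le_contravar.
have -> : / INR T - / INR m
  = (INR m * INR M - INR T * INR M) * / (INR T * (INR m * INR M)) by field; lra.
have -> : x / (INR m * INR M) = x * INR T * / (INR T * (INR m * INR M)) by field; lra.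
apply: Rmult_le_compat_r; last by nra.
apply/Rlt_le/Rinv_0_lt_compat.
by apply: Rmult_lt_0_compat => //; apply: Rmult_lt_0_compat; lra.
Qed.
End BoxRatio.

Section Density.
Local Open Scope R_scope.

Lemma box_ratio_aed_le (n a h t k : nat) (C : pred (vec n)) :
  (0 < n)%N -> (h <= n)%N -> (t <= a * h)%N -> AED a h t C ->
  box_ratio C k <= / INR t.+1 + INR (h * a) * / INR k.+1.
Proof.
move=> n0 hn ht aed; apply: box_ratio_le_of_count => //.
exact: aed_box_count.
Qed.

Lemma Cnt_density (n t : nat) : (0 < n)%N -> Un_cv (box_ratio (Cnt n t)) (/ INR t.+1).
Proof.
move=> n0; apply: (Un_cv_squeeze _ (Un_cv_inv_succ_affine _ (-1))
  (Un_cv_inv_succ_affine _ (INR (1 * t)))) => k.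
(* C(n;t) is also AED for the channel with h = 1 and a = t. *)
split; last by apply: box_ratio_aed_le => //; [rewrite muln1 | exact: Cnt_AED].
rewrite -Ropp_mult_distr_l Rmult_1_l.
apply: (@box_ratio_ge_of_count _ _ _ n0 t.+1 t) => //.
exact: Cnt_box_count (Ordinal n0).
Qed.

Lemma aed_upper_density_le (n a h t : nat) (C : pred (vec n)) (d : R) :
  (0 < n)%N -> (h <= n)%N -> (t <= a * h)%N -> AED a h t C ->
  is_upper_density C d -> d <= / INR t.+1.
Proof.
move=> n0 hn ht aed; apply: is_limsup_le_lim (Un_cv_inv_succ_affine _ (INR (h * a))) => k.
exact: box_ratio_aed_le.
Qed.
End Density.

Theorem theorem2 (n a h t : nat)
  (hn : leq 1 n) (ha : leq 1 a) (hh : leq 1 h) (ht : leq 1 t)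
  (hhn : leq h n) (hat : leq a t) (hta : leq t (muln a h)) :
  AED a h t (Cnt n t) /\
  has_density (Cnt n t) (Rinv (INR (S t))) /\
  (forall (C : pred (vec n)) (d : R),
      AED a h t C -> is_upper_density C d -> Rle d (Rinv (INR (S t)))).
Proof.
split; first exact: Cnt_AED.
split; first exact: Cnt_density.
by move=> C d; apply: aed_upper_density_le.
Qed.
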